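(* Let $\mathcal{M}$ be a von Neumann algebra with a faithful tracial state $\tau$, and let $U\in\mathcal{M}$ be a unitary. The following are equivalent: (1) $U=U^*$; (2) the operator $(U+iI)/\sqrt{2}$ is a unitary; (3) there exists a unitary $V\in\mathcal{M}$ such that $\sqrt{2}\,\operatorname{Re}\tau(U^*V)-\operatorname{Im}\tau(U-\sqrt{2}V)=2$. *)

(* unital *-algebras over the complex numbers R[i]
   (R : realType, complex from mathcomp-real-closed) with a faithful tracial state. *)
From HB Require Import structures.
From mathcomp Require Import all_boot all_order all_algebra.
From mathcomp Require Import reals.
From mathcomp Require Export complex.
Set Implicit Arguments. Unset Strict Implicit. Unset Printing Implicit Defensive.
Import Order.TTheory GRing.Theory Num.Theory.
Local Open Scope ring_scope.

Section StarAlg.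
Variables (C : numClosedFieldType) (A : algType C).

Definition is_star (star : A -> A) : Prop :=
  [/\ involutive star,
      forall x y, star (x + y) = star x + star y,
      forall (c : C) x, star (c *: x) = c^* *: star x &
      forall x y, star (x * y) = star y * star x].

Definition faithful_tracial_state (star : A -> A) (tau : A -> C) : Prop :=
  [/\ (forall x y, tau (x + y) = tau x + tau y) /\
        (forall (c : C) x, tau (c *: x) = c * tau x),
      tau 1 = 1,
      forall x, 0 <= tau (star x * x),
      forall x, tau (star x * x) = 0 -> x = 0 &
      forall x y, tau (x * y) = tau (y * x)].

Definition unitary (star : A -> A) (U : A) : Prop :=
  star U * U = 1 /\ U * star U = 1.
End StarAlg.

From HB Require Import structures.
From mathcomp Require Import all_boot all_order all_algebra.
From mathcomp Require Import reals.
From mathcomp Require Import complex.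
From mathcomp Require Import ring.
Import Order.TTheory GRing.Theory Num.Theory.
Local Open Scope ring_scope.

(* Put W = (U + i)/sqrt 2.  For a unitary U one computes
   W^* W = W W^* = 1 + (i/2)(U^* - U), so W is unitary exactly when U is
   self-adjoint.  A positive functional is hermitian, tau(x^* ) = conj (tau x),
   and expanding the 2-norm then gives, for every unitary V,
     tau((W - V)^* (W - V)) = 2 - (sqrt 2 Re tau(U^* V) - Im tau(U - sqrt 2 V)).
   So the quantity in (3) is at most 2, and by faithfulness it equals 2 only
   for V = W. *)

Section TracialStarAlgebra.
Context {C : numClosedFieldType} {A : algType C} {star : A -> A} {tau : A -> C}.

Lemma real_add_i_sub_conjC (a b : C) :
  a + b \is Num.real -> 'i * (a - b) \is Num.real -> b = a^*.
Proof.
move=> /Creal_ImP; rewrite raddfD /= => /eqP; rewrite addr_eq0 => /eqP Im_ab.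
move=> /Creal_ImP; rewrite ImMil raddfB /= => /eqP; rewrite subr_eq0 => /eqP Re_ab.
by apply/eqCP; rewrite Re_conj Im_conj Re_ab Im_ab opprK.
Qed.

Lemma sqrtC2_real : (sqrtC 2 : C) \is Num.real.
Proof. by rewrite sqrtC_real ?ler0n. Qed.

Lemma sqrtC2_neq0 : (sqrtC 2 : C) != 0.
Proof. by rewrite sqrtC_eq0 pnatr_eq0. Qed.

Lemma sqrtC2V_sqr : (sqrtC 2)^-1 * (sqrtC 2)^-1 = 2^-1 :> C.
Proof. by rewrite -invfM -expr2 sqrtCK. Qed.

Lemma mulr_add_scale1 (x y : A) (c d : C) :
  (x + c *: 1) * (y + d *: 1) = x * y + d *: x + c *: y + (c * d) *: 1.
Proof.
by rewrite mulrDl !mulrDr -!scalerAl -!scalerAr !mul1r !mulr1 scalerA addrA.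
Qed.

Lemma scale_half_add_i_sub (x y : A) :
  2^-1 *: (1 + (- 'i) *: x + 'i *: y + 1) = 1 + (2^-1 * 'i) *: (y - x).
Proof.
rewrite scaleNr addrAC [1 + _ + 1]addrAC -addrA [- _ + _]addrC -scalerBr.
rewrite scalerDr scalerA.
by rewrite -mulr2n -scaler_nat scalerA mulVf ?pnatr_eq0 // scale1r.
Qed.

Hypothesis star_is_star : is_star star.

Lemma starK : involutive star. Proof. by case: star_is_star. Qed.
Lemma starD x y : star (x + y) = star x + star y. Proof. by case: star_is_star. Qed.
Lemma starZ c x : star (c *: x) = c^* *: star x. Proof. by case: star_is_star. Qed.
Lemma starM x y : star (x * y) = star y * star x. Proof. by case: star_is_star. Qed.

Lemma starN x : star (- x) = - star x.
Proof. by rewrite -scaleN1r starZ rmorphN1 scaleN1r. Qed.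

Lemma starB x y : star (x - y) = star x - star y.
Proof. by rewrite starD starN. Qed.

Lemma star1 : star 1 = 1.
Proof. by rewrite -[LHS]mulr1 -[X in _ * X]starK -starM mulr1 starK. Qed.

Definition normalized_add_i (U : A) : A := (sqrtC 2)^-1 *: (U + 'i *: 1).

Lemma star_normalized_add_i U :
  star (normalized_add_i U) = (sqrtC 2)^-1 *: (star U + (- 'i) *: 1).
Proof.
by rewrite starZ starD starZ star1 conjCi fmorphV /= (conj_Creal sqrtC2_real).
Qed.

Lemma star_normalized_add_i_mul U : star U * U = 1 ->
  star (normalized_add_i U) * normalized_add_i U = 1 + (2^-1 * 'i) *: (star U - U).
Proof.
move=> UU; rewrite star_normalized_add_i -scalerAl -scalerAr scalerA sqrtC2V_sqr.
rewrite mulr_add_scale1 UU mulNr -expr2 sqrCi opprK scale1r [1 + _ + _]addrAC.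
exact: scale_half_add_i_sub.
Qed.

Lemma normalized_add_i_mul_star U : U * star U = 1 ->
  normalized_add_i U * star (normalized_add_i U) = 1 + (2^-1 * 'i) *: (star U - U).
Proof.
move=> UU; rewrite star_normalized_add_i -scalerAl -scalerAr scalerA sqrtC2V_sqr.
rewrite mulr_add_scale1 UU mulrN -expr2 sqrCi opprK scale1r.
exact: scale_half_add_i_sub.
Qed.

Lemma unitary_normalized_add_iP U :
  unitary star U -> unitary star (normalized_add_i U) <-> U = star U.
Proof.
move=> [UU_star U_starU]; rewrite /unitary.
rewrite star_normalized_add_i_mul // normalized_add_i_mul_star //.
split=> [[WW_star _] | <-]; last by rewrite subrr scaler0 addr0.
have /eqP : (2^-1 * 'i) *: (star U - U) = 0.
  by apply: (@addrI _ 1); rewrite addr0; exact: WW_star.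
by rewrite scaler_eq0 mulf_eq0 invr_eq0 pnatr_eq0 (negbTE (neq0Ci C)) /= subr_eq0 => /eqP.
Qed.

Hypothesis tau_is_state : faithful_tracial_state star tau.

Lemma tauD x y : tau (x + y) = tau x + tau y. Proof. by case: tau_is_state => -[]. Qed.
Lemma tauZ c x : tau (c *: x) = c * tau x. Proof. by case: tau_is_state => -[]. Qed.
Lemma tau1 : tau 1 = 1. Proof. by case: tau_is_state. Qed.
Lemma tau_ge0 x : 0 <= tau (star x * x). Proof. by case: tau_is_state. Qed.
Lemma tau_faithful x : tau (star x * x) = 0 -> x = 0.
Proof. by case: tau_is_state => _ _ _ /(_ x). Qed.

Lemma tau0 : tau 0 = 0.
Proof. by rewrite -(scale0r 0) tauZ mul0r. Qed.

Lemma tauN x : tau (- x) = - tau x.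
Proof. by rewrite -scaleN1r tauZ mulN1r. Qed.

Lemma tauB x y : tau (x - y) = tau x - tau y.
Proof. by rewrite tauD tauN. Qed.

Lemma tau_add_star_real x : tau x + tau (star x) \is Num.real.
Proof.
have := ger0_real (tau_ge0 (1 + x)).
rewrite starD star1 mulrDl !mulrDr !mul1r mulr1 !tauD tau1 addrA.
by rewrite (rpredDr _ (ger0_real (tau_ge0 x))) -addrA (rpredDl _ (rpred1 _)).
Qed.

Lemma tau_star x : tau (star x) = (tau x)^*.
Proof.
apply: real_add_i_sub_conjC; first exact: tau_add_star_real.
have := tau_add_star_real ('i *: x).
by rewrite starZ conjCi !tauZ mulNr mulrBr.
Qed.

Lemma tau_norm_sub x y : tau (star (x - y) * (x - y)) =
  tau (star x * x) + tau (star y * y) - 2 * 'Re (tau (star x * y)).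
Proof.
rewrite starB mulrBl !mulrBr !tauB ReE mulrC divfK ?pnatr_eq0 //.
have -> : tau (star y * x) = (tau (star x * y))^* by rewrite -tau_star starM starK.
ring.
Qed.

Definition tau_pairing (U V : A) : C :=
  sqrtC 2 * 'Re (tau (star U * V)) - 'Im (tau (U - sqrtC 2 *: V)).

Lemma tau_star_normalized_add_i_mul U : star U * U = 1 ->
  tau (star (normalized_add_i U) * normalized_add_i U) = 1 + 'Im (tau U).
Proof.
move=> UU; rewrite star_normalized_add_i_mul // tauD tauZ tauB tau1 tau_star ImE.
by congr (_ + _); ring.
Qed.

Lemma Re_tau_star_normalized_add_i_mul U V :
  'Re (tau (star (normalized_add_i U) * V)) =
  (sqrtC 2)^-1 * ('Re (tau (star U * V)) + 'Im (tau V)).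
Proof.
have sqrtC2V_real : (sqrtC 2 : C)^-1 \is Num.real by rewrite realV sqrtC2_real.
rewrite star_normalized_add_i -scalerAl tauZ mulrDl tauD -scalerAl mul1r tauZ.
by rewrite ReMl // raddfD /= mulNr raddfN /= ReMil opprK.
Qed.

Lemma tau_norm_normalized_add_i_sub U V : star U * U = 1 -> star V * V = 1 ->
  tau (star (normalized_add_i U - V) * (normalized_add_i U - V)) = 2 - tau_pairing U V.
Proof.
move=> UU VV; rewrite tau_norm_sub tau_star_normalized_add_i_mul // VV tau1.
rewrite Re_tau_star_normalized_add_i_mul /tau_pairing tauB tauZ ['Im (_ - _)]raddfB /=.
rewrite ImMl ?sqrtC2_real // mulrA.
have -> : 2 * (sqrtC 2)^-1 = sqrtC 2 :> C by rewrite -{1}(sqrtCK 2) expr2 mulfK ?sqrtC2_neq0.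
ring.
Qed.

Lemma tau_pairing_eq2P U V : star U * U = 1 -> star V * V = 1 ->
  tau_pairing U V = 2 <-> V = normalized_add_i U.
Proof.
move=> UU VV; split=> [pairing2 | V_W].
  apply/eqP; rewrite eq_sym -subr_eq0; apply/eqP/tau_faithful.
  by rewrite tau_norm_normalized_add_i_sub // pairing2 subrr.
apply/eqP; rewrite -subr_eq0 -opprB oppr_eq0 -tau_norm_normalized_add_i_sub //.
by rewrite V_W subrr mulr0 tau0.
Qed.

End TracialStarAlgebra.

Theorem lemma2p1 (R : realType) (A : algType R[i]) (star : A -> A) (tau : A -> R[i])
  (Hstar : is_star star) (Htau : faithful_tracial_state star tau)
  (U : A) (HU : unitary star U) :
  [<-> U = star U;
       unitary star ((sqrtC 2)^-1 *: (U + 'i *: 1));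
       exists V : A, unitary star V /\
         sqrtC 2 * 'Re (tau (star U * V)) - 'Im (tau (U - sqrtC 2 *: V)) = 2].
Proof.
have UU : star U * U = 1 by case: HU.
have unitary_WP := unitary_normalized_add_iP Hstar U HU.
tfae.
- by move=> self_adjoint; apply/unitary_WP.
- move=> unitary_W; exists (normalized_add_i U); split=> //.
  have [WW _] := unitary_W.
  exact/(tau_pairing_eq2P Hstar Htau U _ UU WW).
- move=> [V [unitary_V pairing2]].
  have [VV _] := unitary_V.
  apply/unitary_WP; move/(tau_pairing_eq2P Hstar Htau U V UU VV): pairing2 => <-.
  exact: unitary_V.
Qed.
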